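(* For $n\ge 2$, let $\mathscr{C}_n=\langle Q,\{a,b\},\delta\rangle$ be the Černý automaton with $Q=\{0,1,\dots,n-1\}$, where $\delta(i,b)=i+1$ for $0\le i\le n-2$, $\delta(n-1,b)=0$, $\delta(i,a)=i$ for $0\le i\le n-2$, and $\delta(n-1,a)=0$. Then $sc(Syn(\mathscr{C}_n))=2^n-n$.
   Context: For a DFA $\mathscr{A}=\langle Q,\Sigma,\delta\rangle$ (total transition function, extended to words), $Syn(\mathscr{A})$ is the set of words $w\in\Sigma^*$ such that $\delta(q,w)=\delta(q',w)$ for all $q,q'\in Q$. The state complexity $sc(L)$ of a regular language $L$ is the number of states of the minimal (complete) DFA recognizing $L$. *)

From mathcomp Require Import all_boot.
Set Implicit Arguments. Unset Strict Implicit. Unset Printing Implicit Defensive.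

Definition delta_star (Q S : Type) (delta : Q -> S -> Q) (q : Q) (w : seq S) : Q :=
  foldl delta q w.

Definition Syn (Q S : Type) (delta : Q -> S -> Q) (w : seq S) : Prop :=
  forall q q' : Q, delta_star delta q w = delta_star delta q' w.

Record dfa (S : finType) := DFA {
  dfa_state : finType;
  dfa_trans : dfa_state -> S -> dfa_state;
  dfa_init : dfa_state;
  dfa_final : {set dfa_state} }.

Definition dfa_accepts (S : finType) (A : dfa S) (w : seq S) : bool :=
  delta_star (@dfa_trans S A) (dfa_init A) w \in dfa_final A.

Definition recognizes (S : finType) (A : dfa S) (L : seq S -> Prop) : Prop :=
  forall w, dfa_accepts A w <-> L w.

Definition state_complexity_is (S : finType) (L : seq S -> Prop) (k : nat) : Prop :=
  (exists A : dfa S, recognizes A L /\ #|dfa_state A| = k) /\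
  (forall A : dfa S, recognizes A L -> k <= #|dfa_state A|).

Definition letter_a : bool := true.
Definition letter_b : bool := false.

Definition cerny_trans (n : nat) (i : 'I_n) (c : bool) : 'I_n :=
  let n_gt0 : 0 < n := leq_ltn_trans (leq0n i) (ltn_ord i) in
  if c == letter_a then
    (if (i : nat) == n.-1 then Ordinal n_gt0 else i)
  else Ordinal (ltn_pmod i.+1 n_gt0).

From mathcomp Require Import all_boot zify.
Set Implicit Arguments. Unset Strict Implicit. Unset Printing Implicit Defensive.

(* The minimal DFA of Syn(A) is the subset automaton on the sets reachable from Q,
   with all sets of size at most one merged into one accepting sink.  For the Cerny
   automaton every nonempty set is reachable: a proper nonempty X contains the
   b-successor of some x outside X, and a conjugate of a by a power of b maps x |: X
   onto X.  Two sets with at least two elements are distinguished by a word sending a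
   state in one but not the other to n-1 and every other state to n-2.  So the
   2^n - n - 1 sets of size at least two and the sink are pairwise inequivalent. *)

Lemma delta_star_cat (Q S : Type) (delta : Q -> S -> Q) q w1 w2 :
  delta_star delta q (w1 ++ w2) = delta_star delta (delta_star delta q w1) w2.
Proof. exact: foldl_cat. Qed.

Lemma recognizes_card_ge (S T : finType) (L : seq S -> Prop) (ws : T -> seq S) :
  (forall s t, (forall u, L (ws s ++ u) <-> L (ws t ++ u)) -> s = t) ->
  forall A : dfa S, recognizes A L -> #|T| <= #|dfa_state A|.
Proof.
move=> ws_sep A recA.
pose f s := delta_star (@dfa_trans S A) (dfa_init A) (ws s).
apply: (@leq_card _ _ f) => s t fst; apply: ws_sep => u.
by rewrite -!recA /dfa_accepts !delta_star_cat -/(f s) -/(f t) fst.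
Qed.

Lemma exists_boundary (T : finType) (f : T -> T) (X : {set T}) :
  (forall x y, exists k, iter k f x = y) -> X != set0 -> X != setT ->
  exists2 x, x \notin X & f x \in X.
Proof.
move=> f_trans /set0Pn[x Xx]; rewrite -subTset => /subsetPn[y _ Xy].
have [/exists_inP[z] | out_closed] := boolP [exists z in ~: X, f z \in X].
  by rewrite inE; exists z.
suff: x \notin X by rewrite Xx.
have [k <-] := f_trans y x.
elim: k y Xy => // k IHk y Xy; rewrite iterSr IHk //.
by apply: contra out_closed => fyX; apply/exists_inP; exists y; rewrite ?inE.
Qed.

Section SynchronizingSets.

Variables (S Q : finType) (delta : Q -> S -> Q).

Notation star := (delta_star delta).

Definition word_image (w : seq S) (X : {set Q}) : {set Q} := [set star q w | q in X].

Lemma word_image_nil (X : {set Q}) : word_image [::] X = X.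
Proof. exact: imset_id. Qed.

Lemma word_image_cat w1 w2 (X : {set Q}) :
  word_image (w1 ++ w2) X = word_image w2 (word_image w1 X).
Proof. by rewrite /word_image -imset_comp; apply: eq_imset => q; apply: delta_star_cat. Qed.

Lemma SynE w : Syn delta w <-> #|word_image w setT| <= 1.
Proof.
split=> [synw | /card_le1_eqP le1 q q'].
  by apply/card_le1_eqP => _ _ /imsetP[q _ ->] /imsetP[q' _ ->]; apply: synw.
by apply: le1; apply: imset_f.
Qed.

Lemma word_image_setT_of_expanding :
  (forall X : {set Q}, X != set0 -> X != setT ->
     exists (Y : {set Q}) w, #|X| < #|Y| /\ word_image w Y = X) ->
  forall X : {set Q}, X != set0 -> exists w, word_image w setT = X.
Proof.
move=> expand X; have [k] := ubnP (#|Q| - #|X|).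
elim: k X => // k IHk X ltXk X_neq0.
have [-> | X_neqT] := eqVneq X setT; first by exists [::]; rewrite word_image_nil.
have [Y [w [ltXY <-]]] := expand X X_neq0 X_neqT.
have [||v <-] := IHk Y.
- by have := max_card Y; lia.
- by apply: contraTneq ltXY => ->; rewrite cards0.
- by exists (v ++ w); rewrite word_image_cat.
Qed.

Definition isolates (w : seq S) (x : Q) : Prop :=
  exists2 z, star x w != z & forall q, q != x -> star q w = z.

Lemma isolates_card_image_le1 w x (X : {set Q}) :
  isolates w x -> x \notin X -> #|word_image w X| <= 1.
Proof.
case=> z _ wz xNX; apply/card_le1_eqP => _ _ /imsetP[p pX ->] /imsetP[q qX ->].
by rewrite !wz //; apply: contraNneq xNX => <-.
Qed.

Lemma isolates_card_image_gt1 w x (X : {set Q}) :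
  isolates w x -> x \in X -> 1 < #|X| -> 1 < #|word_image w X|.
Proof.
case=> z xz wz xX; rewrite (cardsD1 x) xX ltnS card_gt0 => /set0Pn[y].
rewrite in_setD1 => /andP[yx yX].
have: [set star x w; star y w] \subset word_image w X.
  by apply/subsetP => _ /set2P[] ->; apply: imset_f.
by move/subset_leq_card; rewrite cards2 (wz y) // xz.
Qed.

Variable q0 : Q.

(* All sets with at most one element are represented by [set q0]: once a word
   has collapsed Q to a single state, every extension of it is synchronizing. *)
Definition collapse (X : {set Q}) : {set Q} := if 1 < #|X| then X else [set q0].

Definition collapsed (X : {set Q}) : bool := (1 < #|X|) || (X == [set q0]).

Lemma collapsedP (X : {set Q}) : collapsed (collapse X).
Proof. by rewrite /collapsed /collapse; case: ifP => [->|] //; rewrite eqxx orbT. Qed.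

Lemma collapse_id (X : {set Q}) : collapsed X -> collapse X = X.
Proof. by rewrite /collapse => /orP[-> | /eqP->] //; case: ifP. Qed.

Lemma collapse_word_image w (X : {set Q}) :
  collapse (word_image w (collapse X)) = collapse (word_image w X).
Proof.
rewrite [collapse X]/collapse; case: ltnP => // le1X.
have le1wX : #|word_image w X| <= 1 by apply: leq_trans (leq_imset_card _ _) le1X.
have -> : word_image w [set q0] = [set star q0 w] by exact: imset_set1.
by rewrite /collapse [in RHS]ltnNge le1wX cards1.
Qed.

Lemma collapse_eq_set1 (X : {set Q}) : (collapse X == [set q0]) = (#|X| <= 1).
Proof.
rewrite /collapse; case: (ltnP 1 #|X|) => [lt1X | _]; last by rewrite eqxx.
by apply: contraTF lt1X => /eqP->; rewrite cards1.
Qed.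

Lemma collapsed_neq0 (X : {set Q}) : collapsed X -> X != set0.
Proof.
case/orP => [|/eqP->]; last by apply/set0Pn; exists q0; rewrite inE.
by apply: contraTneq => ->; rewrite cards0.
Qed.

Definition syn_state := {X : {set Q} | collapsed X}.

Definition syn_step (s : syn_state) (c : S) : syn_state :=
  exist _ (collapse (word_image [:: c] (val s))) (collapsedP _).

Definition syn_dfa : dfa S :=
  DFA syn_step (exist _ (collapse setT) (collapsedP _)) [set s | val s == [set q0]].

Lemma syn_dfa_star w s :
  val (delta_star syn_step s w) = collapse (word_image w (val s)).
Proof.
elim: w s => [|c w IHw] s /=; first by rewrite word_image_nil collapse_id //; apply: valP.
by rewrite [LHS]IHw collapse_word_image -word_image_cat.
Qed.

Lemma syn_dfa_recognizes : recognizes syn_dfa (Syn delta).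
Proof.
move=> w; rewrite SynE /dfa_accepts inE syn_dfa_star collapse_word_image.
by rewrite collapse_eq_set1.
Qed.

Lemma card_syn_state : #|{: syn_state}| = 2 ^ #|Q| - #|Q|.
Proof.
rewrite card_sig -cardsE; set A := [set _ in _].
pose small q : {set Q} := if q == q0 then set0 else [set q].
have small_inj : injective small.
  move=> p q; rewrite /small.
  case: (eqVneq p q0) => [->|pq0]; case: (eqVneq q q0) => [->|qq0] //.
  - by move/setP/(_ q); rewrite !inE eqxx.
  - by move/setP/(_ p); rewrite !inE eqxx.
  - exact: set1_inj.
have not_collapsed : ~: A = [set small q | q in Q].
  apply/setP => X; rewrite !inE /collapsed negb_or -leqNgt; apply/andP/imsetP.
    case=> le1X XNq0; have [/eqP|] := posnP #|X|.
      by rewrite cards_eq0 => /eqP->; exists q0; rewrite // /small eqxx.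
    move=> X_gt0; have /cards1P[x Xx] : #|X| == 1 by rewrite eqn_leq le1X.
    exists x => //; rewrite /small Xx; case: eqVneq => // xq0.
    by rewrite Xx xq0 eqxx in XNq0.
  case=> q _ ->; rewrite /small; case: eqVneq => [_|qNq0].
    by rewrite cards0; split=> //; apply: contraTneq (set11 q0) => <-; rewrite inE.
  by rewrite cards1 (inj_eq set1_inj).
have := cardsC A.
rewrite not_collapsed card_imset // -cardsT -powersetT card_powerset cardsT.
by move=> <-; rewrite addnK.
Qed.

Lemma subset_of_collapsing (X Y : {set Q}) :
  (forall x, exists w, isolates w x) -> 1 < #|X| ->
  (forall u, #|word_image u Y| <= 1 -> #|word_image u X| <= 1) -> X \subset Y.
Proof.
move=> iso gt1X YX; apply/subsetP => x xX; apply/negPn/negP => xNY.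
have [w wx] := iso x.
have := YX w (isolates_card_image_le1 wx xNY).
by rewrite leqNgt (isolates_card_image_gt1 wx xX gt1X).
Qed.

Lemma collapsed_inj :
  (forall x, exists w, isolates w x) -> forall X Y : {set Q}, collapsed X -> collapsed Y ->
  (forall u, (#|word_image u X| <= 1) = (#|word_image u Y| <= 1)) -> X = Y.
Proof.
move=> iso X Y cX cY XY.
have gt1XY : (1 < #|X|) = (1 < #|Y|).
  by have := XY [::]; rewrite !word_image_nil !ltnNge => ->.
case/orP: cX => [gt1X | /eqP X1].
  apply/eqP; rewrite eqEsubset.
  rewrite (subset_of_collapsing iso gt1X) => [|u]; last by rewrite XY.
  by rewrite (subset_of_collapsing iso) -?gt1XY // => u; rewrite XY.
case/orP: cY => [gt1Y | /eqP-> //].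
by rewrite -gt1XY X1 cards1 in gt1Y.
Qed.

Theorem state_complexity_Syn :
  (forall X : {set Q}, X != set0 -> exists w, word_image w setT = X) ->
  (forall x, exists w, isolates w x) ->
  state_complexity_is (Syn delta) (2 ^ #|Q| - #|Q|).
Proof.
move=> reach iso; split.
  by exists syn_dfa; split; [exact: syn_dfa_recognizes | exact: card_syn_state].
move=> A recA; rewrite -card_syn_state.
have reach_s (s : syn_state) : exists w, word_image w setT == val s.
  by have [w <-] := reach _ (collapsed_neq0 (valP s)); exists w.
pose ws s := xchoose (reach_s s).
apply: (@recognizes_card_ge _ _ _ ws) recA => s t st; apply/val_inj.
apply: (collapsed_inj iso (valP s) (valP t)) => u.
have wsE r : word_image (ws r ++ u) setT = word_image u (val r).
  by rewrite word_image_cat (eqP (xchooseP (reach_s r))).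
by apply/idP/idP => /=; rewrite -!wsE -!SynE => /st.
Qed.

End SynchronizingSets.

Section Cerny.

Variable m : nat.

Notation cerny := (@cerny_trans m.+1).

Definition cerny_succ (q : 'I_m.+1) : 'I_m.+1 := cerny q letter_b.

Lemma cerny_trans_a q : cerny q letter_a = if q == ord_max then ord0 else q.
Proof.
rewrite /cerny_trans /=; have -> : (q == ord_max) = (q == m :> nat) by [].
by case: ifP => // _; apply: val_inj.
Qed.

Lemma delta_star_nseq_b k q : delta_star cerny q (nseq k letter_b) = iter k cerny_succ q.
Proof. by elim: k q => // k IHk q; rewrite iterSr -IHk. Qed.

Lemma val_iter_succ k q : val (iter k cerny_succ q) = (q + k) %% m.+1.
Proof.
elim: k => [|k IHk]; first by rewrite addn0 modn_small.
by rewrite iterS /= IHk -addn1 modnDml addn1 addnS.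
Qed.

Lemma iter_succ_period q : iter m.+1 cerny_succ q = q.
Proof. by apply: val_inj; rewrite val_iter_succ modnDr modn_small. Qed.

Lemma iter_succ_transitive x y : exists k, iter k cerny_succ x = y.
Proof.
exists (m.+1 - x + y); apply: val_inj; rewrite val_iter_succ.
have -> : x + (m.+1 - x + y) = y + m.+1 by have := ltn_ord x; lia.
by rewrite modnDr modn_small.
Qed.

Lemma iter_succ_eq_max (x q : 'I_m.+1) : (iter (m - x) cerny_succ q == ord_max) = (q == x).
Proof.
have lexm : x <= m by rewrite -ltnS.
have rotK : cancel (iter (m - x) cerny_succ) (iter x.+1 cerny_succ).
  by move=> p; rewrite -iterD addSn subnKC // iter_succ_period.
have -> : ord_max = iter (m - x) cerny_succ x.
  by apply: val_inj; rewrite val_iter_succ subnKC // modn_small.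
by rewrite (inj_eq (can_inj rotK)).
Qed.

(* b^(m-x) moves x to m, the only state a moves; b^(x+1) then undoes the rotation. *)
Definition merge_word (x : nat) : seq bool :=
  nseq (m - x) letter_b ++ letter_a :: nseq x.+1 letter_b.

Lemma cerny_merge_word (x q : 'I_m.+1) :
  delta_star cerny q (merge_word x) = if q == x then cerny_succ x else q.
Proof.
rewrite delta_star_cat delta_star_nseq_b [LHS]/delta_star /= -/(delta_star _ _ _).
rewrite delta_star_nseq_b cerny_trans_a iter_succ_eq_max -/(cerny_succ _) -iterSr.
case: eqVneq => _; first by apply: val_inj; rewrite val_iter_succ.
by rewrite -iterD addSn subnKC ?iter_succ_period // -ltnS.
Qed.

Lemma cerny_expanding (X : {set 'I_m.+1}) : X != set0 -> X != setT ->
  exists (Y : {set 'I_m.+1}) w, #|X| < #|Y| /\ word_image cerny w Y = X.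
Proof.
move=> X_neq0 X_neqT.
have [x xNX sxX] := exists_boundary iter_succ_transitive X_neq0 X_neqT.
exists (x |: X), (merge_word x); split; first by rewrite cardsU1 xNX.
apply/setP => q; apply/imsetP/idP => [[p] | qX].
  by rewrite in_setU1 cerny_merge_word => /orP[/eqP-> | pX] ->; [rewrite eqxx | case: ifP].
exists q; first by rewrite in_setU1 qX orbT.
by rewrite cerny_merge_word; case: eqVneq qX => // ->; rewrite (negbTE xNX).
Qed.

Fixpoint sweep_word (k : nat) : seq bool :=
  if k is k'.+1 then sweep_word k' ++ merge_word k' else [::].

Lemma val_sweep_word k q : k < m ->
  delta_star cerny q (sweep_word k) = (if q == m :> nat then m else maxn q k) :> nat.
Proof.
elim: k => [|k IHk] ltkm /=; first by rewrite maxn0; case: eqP.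
have ltkm1 : k < m.+1 by lia.
rewrite delta_star_cat (cerny_merge_word (Ordinal ltkm1)).
have := IHk (ltnW ltkm); set p := delta_star _ _ _ => pE.
case: (p =P Ordinal ltkm1) => [/(congr1 val) /= pk | /eqP pNk].
  by rewrite modn_small //; case: eqP pE; lia.
have {}pNk : p != k :> nat by [].
by case: eqP pE pNk; lia.
Qed.

(* b^(m-x) moves x to m; the sweep then collapses 0, ..., m-1 onto m-1 and fixes m. *)
Definition isolating_word (x : nat) : seq bool :=
  nseq (m - x) letter_b ++ sweep_word m.-1.

Hypothesis m_gt0 : 0 < m.

Lemma cerny_isolates (x : 'I_m.+1) : isolates cerny (isolating_word x) x.
Proof.
have val_isolating q :
    delta_star cerny q (isolating_word x) = (if q == x then m else m.-1) :> nat.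
  rewrite delta_star_cat delta_star_nseq_b val_sweep_word; last lia.
  have := iter_succ_eq_max x q; set p := iter _ _ q => pmax.
  change ((p : nat) == m) with (p == ord_max); rewrite pmax.
  case: (eqVneq q x) => [// | qNx].
  have : (p : nat) != m by rewrite -[_ == _]/(p == ord_max) pmax (negbTE qNx).
  by have := ltn_ord p; lia.
exists (inord m.-1) => [|q qNx].
  by apply/eqP => /(congr1 (@nat_of_ord _)); rewrite val_isolating eqxx inordK; lia.
by apply: ord_inj; rewrite val_isolating inordK ?(negbTE qNx); lia.
Qed.

End Cerny.

Theorem proposition2 (n : nat) (hn : 2 <= n) :
  state_complexity_is (Syn (@cerny_trans n)) (2 ^ n - n).
Proof.
case: n hn => [//|m] hm.
have := @state_complexity_Syn _ _ (@cerny_trans m.+1) ord0; rewrite card_ord; apply.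
  exact: word_image_setT_of_expanding (@cerny_expanding m).
by move=> x; exists (isolating_word m x); exact: cerny_isolates.
Qed.
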